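(* Let $X\in\mathbb{R}^{m\times n}$, $\lambda>0$, and let $f:\mathbb{R}^{m\times n}\to\mathbb{R}$ be an arbitrary function. Consider the original R-PCA problem $$\min_{A,E\in\mathbb{R}^{m\times n}} \operatorname{rank}(A)+\lambda f(E)\quad\text{s.t.}\quad X=A+E, \tag{P}$$ and the original R-LatLRR problem $$\min_{Z\in\mathbb{R}^{n\times n},\,L\in\mathbb{R}^{m\times m},\,E\in\mathbb{R}^{m\times n}} \operatorname{rank}(Z)+\operatorname{rank}(L)+\lambda f(E)\quad\text{s.t.}\quad X-E=(X-E)Z+L(X-E). \tag{T}$$ (i) Let $(A^*,E^* )$ be any optimal solution of (P), let $r=\operatorname{rank}(A^* )$, and let $A^*=U_{A^*}\Sigma_{A^*}V_{A^*}^T$ be its skinny SVD. Let $\widetilde W\in\mathbb{R}^{r\times r}$ be any idempotent matrix ($\widetilde W^2=\widetilde W$), and let $S_1\in\mathbb{R}^{n\times r}$, $S_2\in\mathbb{R}^{r\times m}$ be any matrices satisfying $V_{A^*}^TS_1=0$, $S_2U_{A^*}=0$, $\operatorname{rank}(S_1)\le\operatorname{rank}(\widetilde W)$ and $\operatorname{rank}(S_2)\le\operatorname{rank}(I-\widetilde W)$. Then $(Z^*,L^*,E^* )$ is a minimizer of (T), where $$Z^*=V_{A^*}\widetilde WV_{A^*}^T+S_1\widetilde WV_{A^*}^T,\qquad L^*=U_{A^*}\Sigma_{A^*}(I-\widetilde W)\Sigma_{A^*}^{-1}U_{A^*}^T+U_{A^*}\Sigma_{A^*}(I-\widetilde W)S_2.$$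 (ii) Conversely, if $(Z^*,L^*,E^* )$ is any optimal solution of (T), then $(X-E^*,E^* )$ is a minimizer of (P).
   Context: The skinny SVD of a matrix $A$ of rank $r$ is $A=U_A\Sigma_AV_A^T$ with $U_A,V_A$ having $r$ orthonormal columns and $\Sigma_A$ an $r\times r$ diagonal matrix with positive diagonal entries. $I$ denotes the identity matrix of the appropriate size. *)

From HB Require Import structures.
From mathcomp Require Import all_boot all_order all_algebra.
Set Implicit Arguments. Unset Strict Implicit. Unset Printing Implicit Defensive.
Import Order.TTheory GRing.Theory Num.Theory.
Local Open Scope ring_scope.

Definition is_min_P (R : realFieldType) (m n : nat) (X : 'M[R]_(m, n)) (lam : R)
  (f : 'M[R]_(m, n) -> R) (A E : 'M[R]_(m, n)) : Prop :=
  X = A + E /\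
  forall A' E' : 'M[R]_(m, n), X = A' + E' ->
    (\rank A)%:R + lam * f E <= (\rank A')%:R + lam * f E'.

Definition is_min_T (R : realFieldType) (m n : nat) (X : 'M[R]_(m, n)) (lam : R)
  (f : 'M[R]_(m, n) -> R) (Z : 'M[R]_n) (L : 'M[R]_m) (E : 'M[R]_(m, n)) : Prop :=
  X - E = (X - E) *m Z + L *m (X - E) /\
  forall (Z' : 'M[R]_n) (L' : 'M[R]_m) (E' : 'M[R]_(m, n)),
    X - E' = (X - E') *m Z' + L' *m (X - E') ->
    (\rank Z)%:R + (\rank L)%:R + lam * f E <=
    (\rank Z')%:R + (\rank L')%:R + lam * f E'.

Definition is_skinny_svd (R : realFieldType) (m n r : nat) (A : 'M[R]_(m, n))
  (U : 'M[R]_(m, r)) (d : 'rV[R]_r) (V : 'M[R]_(n, r)) : Prop :=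
  U^T *m U = 1%:M /\ V^T *m V = 1%:M /\ (forall i : 'I_r, 0 < d 0 i) /\
  A = U *m diag_mx d *m V^T.

From HB Require Import structures.
From mathcomp Require Import all_boot all_order all_algebra.
From mathcomp Require Import lra.

Set Implicit Arguments.
Unset Strict Implicit.
Unset Printing Implicit Defensive.
Import Order.TTheory GRing.Theory Num.Theory.
Local Open Scope ring_scope.

(* Both problems have the same optimal value: a clean matrix A = X - E that is
   feasible for (T) with (Z, L) satisfies rank A <= rank Z + rank L, and conversely
   Z = pinv(A) A, L = 0 is feasible with rank Z <= rank A. So rank A plays the
   role of rank Z + rank L, and optimal solutions transfer in both directions.
   For (i) it remains to check that the SVD-based pair Z*, L* is feasible and
   that rank Z* + rank L* <= rank W + rank (I - W) <= r = rank A*, the last step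
   because W (I - W) = 0 for an idempotent W. *)

Section RankBounds.

Variable F : fieldType.

Lemma mxrank_le_latlrr m n (A : 'M[F]_(m, n)) (Z : 'M_n) (L : 'M_m) :
  A = A *m Z + L *m A -> (\rank A <= \rank Z + \rank L)%N.
Proof.
move=> feasA; rewrite {1}feasA; apply: leq_trans (mxrank_add _ _) _.
by apply: leq_add; [exact: mxrankM_maxr | exact: mxrankM_maxl].
Qed.

Lemma latlrr_pinv_feasible m n (A : 'M[F]_(m, n)) :
  A = A *m (pinvmx A *m A) + 0 *m A.
Proof. by rewrite mul0mx addr0 mulmxA mulmxKpV. Qed.

Lemma mxrank_idem_add r (W : 'M[F]_r) :
  W *m W = W -> (\rank W + \rank (1%:M - W)%R <= r)%N.
Proof.
move=> idemW; have := mxrank_mul_min W (1%:M - W).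
rewrite mulmxBr mulmx1 idemW subrr mxrank0 => rank_sum.
by rewrite -subn_eq0 -leqn0.
Qed.

End RankBounds.

Lemma diag_mx_unit (F : fieldType) r (d : 'rV[F]_r) :
  (forall i, d 0 i != 0) -> diag_mx d \in unitmx.
Proof.
by move=> d_neq0; rewrite unitmxE det_diag unitfE; apply/prodf_neq0 => i _.
Qed.

Section SvdSolution.

Variables (F : fieldType) (m n r : nat).
Variables (U : 'M[F]_(m, r)) (D : 'M[F]_r) (V : 'M[F]_(n, r)).
Variables (W : 'M[F]_r) (S1 : 'M[F]_(n, r)) (S2 : 'M[F]_(r, m)).

Let Z := V *m W *m V^T + S1 *m W *m V^T.
Let L := U *m D *m (1%:M - W) *m invmx D *m U^T + U *m D *m (1%:M - W) *m S2.

Lemma svd_solution_rank : W *m W = W -> (\rank Z + \rank L <= r)%N.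
Proof.
move=> idemW; apply: leq_trans _ (mxrank_idem_add idemW); apply: leq_add.
  rewrite /Z -!mulmxDl.
  by apply: leq_trans (mxrankM_maxl _ _) _; exact: mxrankM_maxr.
rewrite /L -!mulmxA -!mulmxDr.
apply: leq_trans (mxrankM_maxr _ _) _.
by apply: leq_trans (mxrankM_maxr _ _) _; exact: mxrankM_maxl.
Qed.

Hypotheses (orthoU : U^T *m U = 1%:M) (orthoV : V^T *m V = 1%:M).
Hypotheses (unitD : D \in unitmx) (S1V : V^T *m S1 = 0) (S2U : S2 *m U = 0).

Let A := U *m D *m V^T.

Lemma svd_solution_feasible : A = A *m Z + L *m A.
Proof.
have AZ : A *m Z = U *m D *m W *m V^T.
  rewrite /A /Z mulmxDr !mulmxA -(mulmxA _ V^T V) orthoV mulmx1.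
  by rewrite -(mulmxA _ V^T S1) S1V mulmx0 !mul0mx addr0.
have LA : L *m A = U *m D *m (1%:M - W) *m V^T.
  rewrite /A /L mulmxDl !mulmxA -(mulmxA _ U^T U) orthoU mulmx1.
  rewrite -(mulmxA _ S2 U) S2U mulmx0 !mul0mx addr0.
  by rewrite -(mulmxA _ (invmx D) D) mulVmx // mulmx1.
by rewrite AZ LA -mulmxDl -mulmxDr addrC subrK mulmx1.
Qed.

End SvdSolution.

Section Transfer.

Variables (R : realFieldType) (m n : nat) (X : 'M[R]_(m, n)) (lam : R).
Variable f : 'M[R]_(m, n) -> R.

Lemma is_min_T_of_P A E (Z : 'M_n) (L : 'M_m) :
  is_min_P X lam f A E -> X - E = (X - E) *m Z + L *m (X - E) ->
  (\rank Z + \rank L <= \rank A)%N -> is_min_T X lam f Z L E.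
Proof.
move=> [defX minAE] feasZL rankZL; split=> // Z' L' E' feasZL'.
have := minAE (X - E') E' (esym (subrK _ _)).
have := mxrank_le_latlrr feasZL'.
move: rankZL; rewrite -!(ler_nat R) !natrD; lra.
Qed.

Lemma is_min_P_of_T (Z : 'M_n) (L : 'M_m) E :
  is_min_T X lam f Z L E -> is_min_P X lam f (X - E) E.
Proof.
move=> [feasZL minZLE]; split=> [|A' E' defX]; first by rewrite subrK.
have defA' : X - E' = A' by rewrite defX addrK.
have := minZLE _ _ _ (latlrr_pinv_feasible (X - E')).
have := mxrank_le_latlrr feasZL.
have : (\rank (pinvmx A' *m A') <= \rank A')%N by exact: mxrankM_maxr.
rewrite defA' mxrank0 -!(ler_nat R) !natrD; lra.
Qed.

End Transfer.

Theorem theorem3 (R : realFieldType) (m n : nat) (X : 'M[R]_(m, n)) (lam : R)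
  (f : 'M[R]_(m, n) -> R) (hlam : 0 < lam) :
  (forall A E : 'M[R]_(m, n), is_min_P X lam f A E ->
   forall (r : nat) (U : 'M[R]_(m, r)) (d : 'rV[R]_r) (V : 'M[R]_(n, r)),
   r = \rank A -> is_skinny_svd A U d V ->
   forall (W : 'M[R]_r) (S1 : 'M[R]_(n, r)) (S2 : 'M[R]_(r, m)),
   W *m W = W -> V^T *m S1 = 0 -> S2 *m U = 0 ->
   leq (\rank S1) (\rank W) -> leq (\rank S2) (\rank (1%:M - W))  ->
   is_min_T X lam f
     (V *m W *m V^T + S1 *m W *m V^T)
     (U *m diag_mx d *m (1%:M - W) *m invmx (diag_mx d) *m U^T
        + U *m diag_mx d *m (1%:M - W) *m S2)
     E)
  /\
  (forall (Z : 'M[R]_n) (L : 'M[R]_m) (E : 'M[R]_(m, n)),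
   is_min_T X lam f Z L E -> is_min_P X lam f (X - E) E).
Proof.
split; last exact: is_min_P_of_T.
move=> A E minAE r U d V rankA [orthoU [orthoV [d_gt0 defA]]] W S1 S2
  idemW S1V S2U _ _.
have unitD : diag_mx d \in unitmx by apply: diag_mx_unit => i; rewrite gt_eqF.
have [defX _] := minAE.
apply: is_min_T_of_P minAE _ _; last by rewrite -rankA svd_solution_rank.
have -> : X - E = A by rewrite defX addrK.
by rewrite defA; exact: svd_solution_feasible.
Qed.
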